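(* Let $C>0$ and let $(u^k)_{k\ge0}$ be a nonnegative sequence satisfying $u^{k+1}\le-2C+2C\sqrt{1+u^k/C}$ for all $k\ge0$. Then $u^k\le C_2/k$ for all $k\ge1$, where $C_2=\max(8C,\,2\sqrt{C u^0})$. *)

From Stdlib Require Import Reals.

From Stdlib Require Import Reals Lra Lia Psatz.
Open Scope R_scope.

(* The map [x |-> -2C + 2C sqrt(1 + x/C)] is increasing and bounded by
   [2 sqrt(C x)], so one step from [u 0] gives [u 1 <= 2 sqrt(C u 0)].  The
   bound [B/k] then propagates by induction: with [t = B/C], the map sends
   [B/k] below [B/(k+1)] iff [sqrt(1 + t/k) <= 1 + t/(2(k+1))], and after
   squaring this asks [t/(k(k+1)) <= t^2/(4(k+1)^2)], i.e. [t k >= 4(k+1)],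
   which holds once [t >= 8]. *)

Lemma sqrt_le_of_le_square (x y : R) : 0 <= y -> x <= y * y -> sqrt x <= y.
Proof.
  intros Hy Hxy. rewrite <- (sqrt_square y) by exact Hy.
  now apply sqrt_le_1_alt.
Qed.

Lemma sqrt_1_plus_le_harmonic (t K : R) : 8 <= t -> 1 <= K ->
  sqrt (1 + t / K) <= 1 + t / (2 * (K + 1)).
Proof.
  intros Ht HK.
  set (a := t / (2 * (K + 1))).
  assert (Ha : 0 <= a) by (unfold a; apply Rle_mult_inv_pos; lra).
  apply sqrt_le_of_le_square; [lra |].
  assert (Ht_a : t / K = 2 * a + 2 * a / K) by (unfold a; field; lra).
  assert (HaK : 2 <= a * K).
  { apply (Rmult_le_reg_r (2 * (K + 1))); [lra |].
    replace (a * K * (2 * (K + 1))) with (t * K) by (unfold a; field; lra).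
    nra. }
  assert (Hgap : 2 * a / K <= a * a).
  { apply (Rmult_le_reg_r K); [lra |].
    replace (2 * a / K * K) with (2 * a) by (field; lra).
    nra. }
  nra.
Qed.

Section SqrtRecursion.

Variable C : R.
Hypothesis C_gt0 : 0 < C.

Definition sqrt_step (x : R) : R := -2 * C + 2 * C * sqrt (1 + x / C).

Lemma sqrt_step_le (x y : R) : x <= y -> sqrt_step x <= sqrt_step y.
Proof.
  intros Hxy. unfold sqrt_step.
  apply Rplus_le_compat_l, Rmult_le_compat_l; [lra |].
  apply sqrt_le_1_alt, Rplus_le_compat_l, Rmult_le_compat_r; [| exact Hxy].
  left; apply Rinv_0_lt_compat, C_gt0.
Qed.

Lemma sqrt_step_le_sqrt (x : R) : 0 <= x -> sqrt_step x <= 2 * sqrt (C * x).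
Proof.
  intros Hx. unfold sqrt_step.
  set (s := sqrt (C * x)).
  assert (Hs : 0 <= s) by apply sqrt_pos.
  assert (Hss : s * s = C * x) by (apply sqrt_sqrt; nra).
  assert (Hsqrt : sqrt (1 + x / C) <= 1 + s / C).
  { assert (HsC : 0 <= s / C) by (apply Rle_mult_inv_pos; lra).
    apply sqrt_le_of_le_square; [lra |].
    replace (x / C) with (s * s / (C * C)) by (rewrite Hss; field; lra).
    replace (s * s / (C * C)) with (s / C * (s / C)) by (field; lra).
    nra. }
  replace (2 * s) with (-2 * C + 2 * C * (1 + s / C)) by (field; lra).
  apply Rplus_le_compat_l, Rmult_le_compat_l; lra.
Qed.

Lemma sqrt_step_harmonic (B K : R) : 8 * C <= B -> 1 <= K ->
  sqrt_step (B / K) <= B / (K + 1).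
Proof.
  intros HB HK. unfold sqrt_step.
  replace (B / K / C) with (B / C / K) by (field; lra).
  replace (B / (K + 1)) with (-2 * C + 2 * C * (1 + B / C / (2 * (K + 1))))
    by (field; lra).
  apply Rplus_le_compat_l, Rmult_le_compat_l; [lra |].
  apply sqrt_1_plus_le_harmonic; [| exact HK].
  apply (Rmult_le_reg_r C); [exact C_gt0 |].
  replace (B / C * C) with B by (field; lra). exact HB.
Qed.

Lemma sqrt_recursion_harmonic_bound (u : nat -> R) (B : R) :
  (forall k, 0 <= u k) ->
  (forall k, u (S k) <= sqrt_step (u k)) ->
  8 * C <= B -> 2 * sqrt (C * u 0%nat) <= B ->
  forall k, u (S k) <= B / INR (S k).
Proof.
  intros Hu Hrec HB8 HB0.
  induction k as [| k IH].
  - rewrite Rdiv_1_r.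
    apply Rle_trans with (sqrt_step (u 0%nat)); [apply Hrec |].
    apply Rle_trans with (2 * sqrt (C * u 0%nat)); [now apply sqrt_step_le_sqrt | exact HB0].
  - rewrite (S_INR (S k)).
    assert (HK : 1 <= INR (S k)) by (apply (le_INR 1); lia).
    apply Rle_trans with (sqrt_step (u (S k))); [apply Hrec |].
    apply Rle_trans with (sqrt_step (B / INR (S k))).
    + now apply sqrt_step_le.
    + now apply sqrt_step_harmonic.
Qed.

End SqrtRecursion.

Theorem lemma3 (C : R) (u : nat -> R) :
  0 < C ->
  (forall k, 0 <= u k) ->
  (forall k, u (S k) <= -2 * C + 2 * C * sqrt (1 + u k / C)) ->
  forall k : nat, (1 <= k)%nat ->
    u k <= Rmax (8 * C) (2 * sqrt (C * u 0%nat)) / INR k.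
Proof.
  intros HC Hu Hrec [| k] Hk; [lia |].
  apply (sqrt_recursion_harmonic_bound C HC u); [exact Hu | exact Hrec | |].
  - apply Rmax_l.
  - apply Rmax_r.
Qed.
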